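(* For every program $\Omega$ with weight constraints, $\Omega$ and its translation $[\Omega]$ (a program with nested expressions) have the same answer sets.
   Context: Programs with nested expressions. A literal is a propositional atom $a$ or its classical negation $\neg a$; a set of literals is consistent if it contains no pair $a,\neg a$. Elementary formulas are literals, $\bot$ and $\top$. Formulas are built from elementary formulas using the unary connective $\mathit{not}$ (negation as failure) and the binary connectives '','' (conjunction) and '';'' (disjunction). A rule with nested expressions has the form $\mathit{Head}\leftarrow \mathit{Body}$ where $\mathit{Head},\mathit{Body}$ are formulas (a formula $F$ alone stands for $F\leftarrow\top$); a program with nested expressions is a set of such rules. For a consistent set $Z$ of literals: $Z\models l$ iff $l\in Z$ for a literal $l$; $Z\models\top$; $Z\not\models\bot$; $Z\models(F,G)$ iff $Z\models F$ and $Z\models G$; $Z\models(F;G)$ iff $Z\models F$ or $Z\models G$; $Z\models \mathit{not}\,F$ iff $Z\not\models F$. $Z$ satisfies a program if for every rule, $Z\models\mathit{Body}$ implies $Z\models\mathit{Head}$. The reduct $F^Z$: $F^Z=F$ for elementary $F$; $(F,G)^Z=F^Z,G^Z$; $(F;G)^Z=F^Z;G^Z$; $(\mathit{not}\,F)^Z=\bot$ if $Z\models F$ and $\top$ otherwise. $\Pi^Z$ is the set of rules $\mathit{Head}^Z\leftarrow\mathit{Body}^Z$ for the rules of $\Pi$. A consistent set $Z$ is an answer set of a program without $\mathit{not}$ if it is a minimal (under inclusion) consistent set of literals satisfying it; $Z$ is an answer set of an arbitrary program $\Pi$ if $Z$ is an answer set of $\Pi^Z$. Abbreviation: for formulas $F_1,\dots,F_n$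 and a set $X$ of subsets of $\{1,\dots,n\}$, $\langle F_1,\dots,F_n\rangle:X$ denotes the disjunction (;) over all $I\in X$ of the conjunctions (,) of the $F_i$, $i\in I$; the empty conjunction is $\top$ and the empty disjunction is $\bot$. Programs with weight constraints. A rule element is a literal $l$ (positive) or $\mathit{not}\ l$ (negative); $Z\models c$ for a rule element is as for formulas. A weight constraint is $L\le\{c_1=w_1,\dots,c_m=w_m\}\le U$ where $L,U$ are real numbers or $\pm\infty$, $c_1,\dots,c_m$ ($m\ge0$) are rule elements and $w_1,\dots,w_m$ are nonnegative reals; $L\le S$ abbreviates $L\le S\le+\infty$ and $S\le U$ abbreviates $-\infty\le S\le U$. A rule with weight constraints is $C_0\leftarrow C_1,\dots,C_n$ ($n\ge0$) with weight constraints $C_i$; the rule elements of $C_0$ are its head elements. A program with weight constraints is a set of such rules. A literal $c$ is identified with the constraint $1\le\{c=1\}$. A consistent set $Z$ of literals satisfies the weight constraint above if $L\le\sum_{j:Z\models c_j}w_j\le U$, and satisfies a program $\Omega$ if for every rule, whenever $Z$ satisfies $C_1,\dots,C_n$ it satisfies $C_0$. The reduct $(L\le S)^Z$ of $L\le S$ is $L^Z\le S'$ where $S'$ is obtained from $S$ by dropping all pairs $c=w$ with $c$ negative, and $L^Z$ is $L$ minus the sum of the weights $w$ of the pairs $c=w$ in $S$ with $c$ negative and $Z\models c$. The reduct of a rule $L_0\le S_0\le U_0\leftarrow L_1\le S_1\le U_1,\dots,L_n\le S_n\le U_n$ w.r.t. $Z$ is, if $Z\models S_i\le U_i$ for all $1\le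 i\le n$, the set of rules $l\leftarrow (L_1\le S_1)^Z,\dots,(L_n\le S_n)^Z$ for all positive head elements $l$ with $Z\models l$; otherwise it is empty. $\Omega^Z$ is the union of the reducts of the rules of $\Omega$. Such a program (literal heads, bodies of the form $L\le S$ with only positive elements) has a unique minimal set of literals satisfying it, its deductive closure $\mathit{cl}(\Omega^Z)$. A consistent set $Z$ of literals is an answer set of $\Omega$ if $Z\models\Omega$ and $\mathit{cl}(\Omega^Z)=Z$. Translation. For $S=\{c_1=w_1,\dots,c_m=w_m\}$ and real $w$: $[w\le S]=\langle c_1,\dots,c_m\rangle:\{I\subseteq\{1,\dots,m\}: w\le\sum_{i\in I}w_i\}$, $[w<S]=\langle c_1,\dots,c_m\rangle:\{I: w<\sum_{i\in I}w_i\}$, $[S\le U]=\mathit{not}\,[U<S]$, and $[L\le S\le U]=[L\le S],[S\le U]$. For a program $\Omega$ with weight constraints, $[\Omega]$ is obtained by replacing each rule $C_0\leftarrow C_1,\dots,C_n$ with $(l_1;\mathit{not}\,l_1),\dots,(l_p;\mathit{not}\,l_p),[C_0]\leftarrow[C_1],\dots,[C_n]$, where $l_1,\dots,l_p$ are the positive head elements of the rule. *)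

From Stdlib Require Import Reals List ClassicalDescription.
Import ListNotations.
Open Scope R_scope.
Set Implicit Arguments.

Inductive lit (A : Type) : Type :=
| LAtom : A -> lit A
| LNeg  : A -> lit A.       (* classical negation  ~a *)
Arguments LAtom {A}. Arguments LNeg {A}.

Definition litset (A : Type) := lit A -> Prop.

Definition consistent {A} (Z : litset A) : Prop :=
  forall a, ~ (Z (LAtom a) /\ Z (LNeg a)).

Definition subset {A} (Y Z : litset A) : Prop := forall l, Y l -> Z l.

Inductive formula (A : Type) : Type :=
| FLit : lit A -> formula A
| FBot : formula A
| FTop : formula A
| FNot : formula A -> formula A
| FAnd : formula A -> formula A -> formula A
| FOr  : formula A -> formula A -> formula A.
Arguments FLit {A}. Arguments FBot {A}. Arguments FTop {A}.
Arguments FNot {A}. Arguments FAnd {A}. Arguments FOr {A}.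

Fixpoint fsat {A} (Z : litset A) (F : formula A) : Prop :=
  match F with
  | FLit l => Z l
  | FBot => False
  | FTop => True
  | FNot G => ~ fsat Z G
  | FAnd G H => fsat Z G /\ fsat Z H
  | FOr G H => fsat Z G \/ fsat Z H
  end.

Fixpoint freduct {A} (Z : litset A) (F : formula A) : formula A :=
  match F with
  | FAnd G H => FAnd (freduct Z G) (freduct Z H)
  | FOr G H => FOr (freduct Z G) (freduct Z H)
  | FNot G => if excluded_middle_informative (fsat Z G) then FBot else FTop
  | _ => F
  end.

Record nrule (A : Type) := mkNRule { nhead : formula A; nbody : formula A }.
Arguments mkNRule {A}.

Definition nprogram (A : Type) := nrule A -> Prop.

Definition nsat {A} (Z : litset A) (P : nprogram A) : Prop :=
  forall r, P r -> fsat Z (nbody r) -> fsat Z (nhead r).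

Definition nreduct {A} (P : nprogram A) (Z : litset A) : nprogram A :=
  fun r' => exists r, P r /\ r' = mkNRule (freduct Z (nhead r)) (freduct Z (nbody r)).

Definition answer_set_notfree {A} (P : nprogram A) (Z : litset A) : Prop :=
  consistent Z /\ nsat Z P /\
  forall Y, consistent Y -> subset Y Z -> nsat Y P -> subset Z Y.

Definition n_answer_set {A} (P : nprogram A) (Z : litset A) : Prop :=
  answer_set_notfree (nreduct P Z) Z.

Fixpoint conjF {A} (l : list (formula A)) : formula A :=
  match l with
  | [] => FTop
  | [F] => F
  | F :: l' => FAnd F (conjF l')
  end.

Fixpoint disjF {A} (l : list (formula A)) : formula A :=
  match l with
  | [] => FBot
  | [F] => F
  | F :: l' => FOr F (disjF l')
  end.

Inductive ebound := EFin (r : R) | EPInf | EMInf.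

Inductive relem (A : Type) : Type :=
| RLit : lit A -> relem A
| RNot : lit A -> relem A.
Arguments RLit {A}. Arguments RNot {A}.

(* L <= {c1 = w1, ..., cm = wm} <= U ; the multiset S is a list of pairs *)
Record wconstr (A : Type) := mkWC
  { lo : ebound; elems : list (relem A * R); hi : ebound }.
Arguments mkWC {A}.

Definition esat {A} (Z : litset A) (c : relem A) : Prop :=
  match c with RLit l => Z l | RNot l => ~ Z l end.

Definition le_eb (L : ebound) (x : R) : Prop :=
  match L with EFin r => r <= x | EPInf => False | EMInf => True end.
Definition ge_eb (U : ebound) (x : R) : Prop :=
  match U with EFin r => x <= r | EPInf => True | EMInf => False end.

Definition wsum {A} (Z : litset A) (S : list (relem A * R)) : R :=
  fold_right (fun p acc =>
    (if excluded_middle_informative (esat Z (fst p)) then snd p else 0) + acc) 0 S.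

Definition wsat {A} (Z : litset A) (C : wconstr A) : Prop :=
  le_eb (lo C) (wsum Z (elems C)) /\ ge_eb (hi C) (wsum Z (elems C)).

Record wrule (A : Type) := mkWR { whead : wconstr A; wbody : list (wconstr A) }.
Arguments mkWR {A}.

Definition wprogram (A : Type) := wrule A -> Prop.

Definition wf_constr {A} (C : wconstr A) : Prop :=
  forall c w, In (c, w) (elems C) -> 0 <= w.
Definition wf_wprogram {A} (O : wprogram A) : Prop :=
  forall r, O r -> wf_constr (whead r) /\ forall C, In C (wbody r) -> wf_constr C.

Definition wsat_prog {A} (Z : litset A) (O : wprogram A) : Prop :=
  forall r, O r -> (forall C, In C (wbody r) -> wsat Z C) -> wsat Z (whead r).

(* reduct: rules  l <- (L1 <= S1'), ..., (Ln <= Sn')  with positive elements only *)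
Record prule (A : Type) := mkPR
  { phead : lit A; pbody : list (ebound * list (lit A * R)) }.
Arguments mkPR {A}.

Definition pos_part {A} (S : list (relem A * R)) : list (lit A * R) :=
  flat_map (fun p => match fst p with RLit l => [(l, snd p)] | RNot _ => [] end) S.

Definition neg_sum {A} (Z : litset A) (S : list (relem A * R)) : R :=
  fold_right (fun p acc =>
    (match fst p with
     | RNot l => if excluded_middle_informative (~ Z l) then snd p else 0
     | RLit _ => 0 end) + acc) 0 S.

Definition sub_eb (L : ebound) (x : R) : ebound :=
  match L with EFin r => EFin (r - x) | b => b end.

Definition creduct {A} (Z : litset A) (C : wconstr A) : ebound * list (lit A * R) :=
  (sub_eb (lo C) (neg_sum Z (elems C)), pos_part (elems C)).

Definition wreduct {A} (O : wprogram A) (Z : litset A) : prule A -> Prop :=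
  fun pr => exists r, O r /\
    (forall C, In C (wbody r) -> ge_eb (hi C) (wsum Z (elems C))) /\
    exists l w, In (RLit l, w) (elems (whead r)) /\ Z l /\
      pr = mkPR l (map (creduct Z) (wbody r)).

Definition psum {A} (Y : litset A) (T : list (lit A * R)) : R :=
  fold_right (fun p acc =>
    (if excluded_middle_informative (Y (fst p)) then snd p else 0) + acc) 0 T.

Definition psat {A} (Y : litset A) (pr : prule A) : Prop :=
  (forall b, In b (pbody pr) -> le_eb (fst b) (psum Y (snd b))) -> Y (phead pr).

Definition pclosed {A} (P : prule A -> Prop) (Y : litset A) : Prop :=
  forall pr, P pr -> psat Y pr.

Definition cl {A} (P : prule A -> Prop) : litset A :=
  fun l => forall Y, pclosed P Y -> Y l.

Definition w_answer_set {A} (O : wprogram A) (Z : litset A) : Prop :=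
  consistent Z /\ wsat_prog Z O /\ forall l, cl (wreduct O Z) l <-> Z l.

(* all sub-(multi)sets of S, given as subsequences (choice of index positions) *)
Fixpoint subseqs {X} (s : list X) : list (list X) :=
  match s with
  | [] => [[]]
  | x :: s' => let r := subseqs s' in map (cons x) r ++ r
  end.

Definition sum_w {X} (I : list (X * R)) : R := fold_right (fun p acc => snd p + acc) 0 I.

Definition elemF {A} (c : relem A) : formula A :=
  match c with RLit l => FLit l | RNot l => FNot (FLit l) end.

Definition tr_sel {A} (sel : R -> bool) (S : list (relem A * R)) : formula A :=
  disjF (map (fun I => conjF (map (fun p => elemF (fst p)) I))
             (filter (fun I => sel (sum_w I)) (subseqs S))).

Definition leb_eb (L : ebound) (x : R) : bool :=
  match L with EFin r => if Rle_dec r x then true else false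
  | EPInf => false | EMInf => true end.
Definition ltb_eb (U : ebound) (x : R) : bool :=
  match U with EFin r => if Rlt_dec r x then true else false
  | EPInf => false | EMInf => true end.

Definition tr_constr {A} (C : wconstr A) : formula A :=
  FAnd (tr_sel (leb_eb (lo C)) (elems C)) (FNot (tr_sel (ltb_eb (hi C)) (elems C))).

Definition pos_heads {A} (C : wconstr A) : list (lit A) := map fst (pos_part (elems C)).

Definition tr_rule {A} (r : wrule A) : nrule A :=
  mkNRule
    (conjF (map (fun l => FOr (FLit l) (FNot (FLit l))) (pos_heads (whead r))
            ++ [tr_constr (whead r)]))
    (conjF (map tr_constr (wbody r))).

Definition tr_prog {A} (O : wprogram A) : nprogram A :=
  fun r' => exists r, O r /\ r' = tr_rule r.

(* With nonnegative weights, [[w <= S]] is monotone in the set of true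
   elements, so the Z-reduct of [[L <= S]] holds in Y iff the positive
   elements true in Y and the negative elements true in Z weigh at least L,
   i.e. iff Y satisfies [(L <= S)^Z]; and [not [U < S]] reduces to the test
   [Z |= S <= U] deciding whether a rule survives in [Omega^Z].  The choice
   rules [l ; not l] of the head add "l in Z implies l in Y".  For Y = Z this
   makes the reduct of [[Omega]] equivalent to [Omega]; for Y included in Z,
   Y satisfies it iff Y is closed under [Omega^Z].  So Z is minimal among its
   models iff Z = cl(Omega^Z). *)
From Stdlib Require Import Reals List ClassicalDescription Classical Lra.
Import ListNotations.
Open Scope R_scope.
Set Implicit Arguments.

Section WeightedSums.
Variable X : Type.

Definition fsum (Q : X -> Prop) (S : list (X * R)) : R :=
  fold_right (fun p acc =>
    (if excluded_middle_informative (Q (fst p)) then snd p else 0) + acc) 0 S.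

Definition nonneg_weights (S : list (X * R)) : Prop := forall p, In p S -> 0 <= snd p.

Lemma fsum_cons Q x S :
  fsum Q (x :: S) = (if excluded_middle_informative (Q (fst x)) then snd x else 0) + fsum Q S.
Proof. reflexivity. Qed.

Lemma sum_w_cons (x : X * R) S : sum_w (x :: S) = snd x + sum_w S.
Proof. reflexivity. Qed.

Lemma nonneg_weights_cons x S :
  nonneg_weights (x :: S) -> 0 <= snd x /\ nonneg_weights S.
Proof. intros H; split; [apply H; left | intros p Hp; apply H; right]; auto. Qed.

Lemma fsum_mono (Q Q' : X -> Prop) S : (forall x, Q x -> Q' x) ->
  nonneg_weights S -> fsum Q S <= fsum Q' S.
Proof.
  intros HQ; induction S as [|x S IH]; intros Hn; [simpl; lra|].
  apply nonneg_weights_cons in Hn as [Hx Hn].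
  rewrite !fsum_cons; specialize (IH Hn).
  destruct (excluded_middle_informative (Q (fst x)));
    destruct (excluded_middle_informative (Q' (fst x))); try lra.
  exfalso; auto.
Qed.

Lemma fsum_ext (Q Q' : X -> Prop) S : (forall p, In p S -> Q (fst p) <-> Q' (fst p)) ->
  fsum Q S = fsum Q' S.
Proof.
  induction S as [|x S IH]; intros H; [reflexivity|].
  rewrite !fsum_cons, IH by (intros p Hp; apply H; right; auto).
  destruct (H x (or_introl eq_refl)).
  destruct (excluded_middle_informative (Q (fst x)));
    destruct (excluded_middle_informative (Q' (fst x))); tauto.
Qed.

Lemma sum_w_subseqs_le (Q : X -> Prop) S I : nonneg_weights S -> In I (subseqs S) ->
  (forall p, In p I -> Q (fst p)) -> sum_w I <= fsum Q S.
Proof.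
  revert I; induction S as [|x S IH]; intros I Hn HI HQ.
  - destruct HI as [<-|[]]; simpl; lra.
  - apply nonneg_weights_cons in Hn as [Hx Hn].
    rewrite fsum_cons; simpl in HI; apply in_app_or in HI as [HI|HI].
    + apply in_map_iff in HI as [I' [<- HI']].
      rewrite sum_w_cons.
      destruct (excluded_middle_informative (Q (fst x))) as [_|nQ];
        [|exfalso; apply nQ, HQ; left; auto].
      enough (sum_w I' <= fsum Q S) by lra.
      apply IH; auto; intros p Hp; apply HQ; right; auto.
    + enough (sum_w I <= fsum Q S) by (destruct (excluded_middle_informative _); lra).
      apply IH; auto.
Qed.

Lemma subseqs_fsum (Q : X -> Prop) S : exists I, In I (subseqs S) /\
  (forall p, In p I -> Q (fst p)) /\ sum_w I = fsum Q S.
Proof.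
  induction S as [|x S [I [HI [HQ Hs]]]].
  - exists []; repeat split; [left; auto | intros _ []].
  - rewrite fsum_cons; simpl.
    destruct (excluded_middle_informative (Q (fst x))) as [Qx|_].
    + exists (x :: I); split; [apply in_or_app; left; apply in_map; auto|].
      split; [intros p [<-|Hp]; auto | rewrite sum_w_cons; lra].
    + exists I; split; [apply in_or_app; right; auto | split; [auto | lra]].
Qed.

Definition monotone_sel (sel : R -> bool) : Prop :=
  forall x y, x <= y -> sel x = true -> sel y = true.

Lemma exists_subseq_sel_iff (Q : X -> Prop) sel S : monotone_sel sel -> nonneg_weights S ->
  (exists I, In I (subseqs S) /\ sel (sum_w I) = true /\ forall p, In p I -> Q (fst p))
  <-> sel (fsum Q S) = true.
Proof.
  intros Hm Hn; split.
  - intros [I [HI [Hs HQ]]]; apply (Hm (sum_w I)); auto.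
    exact (sum_w_subseqs_le Q _ Hn HI HQ).
  - intros H; destruct (subseqs_fsum Q S) as [I [HI [HQ Hs]]].
    exists I; rewrite Hs; auto.
Qed.

End WeightedSums.

Lemma leb_eb_monotone L : monotone_sel (leb_eb L).
Proof.
  intros x y Hxy; destruct L as [r| |]; simpl; auto.
  destruct (Rle_dec r x), (Rle_dec r y); auto; lra.
Qed.

Lemma ltb_eb_monotone U : monotone_sel (ltb_eb U).
Proof.
  intros x y Hxy; destruct U as [r| |]; simpl; auto.
  destruct (Rlt_dec r x), (Rlt_dec r y); auto; lra.
Qed.

Lemma leb_ebE L x : leb_eb L x = true <-> le_eb L x.
Proof.
  destruct L as [r| |]; simpl; [destruct (Rle_dec r x)|..]; split; auto; easy.
Qed.

Lemma ltb_ebE U x : ltb_eb U x = true <-> ~ ge_eb U x.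
Proof.
  destruct U as [r| |]; simpl; [destruct (Rlt_dec r x)|..];
    split; intros; auto; try easy; lra.
Qed.

Lemma le_eb_mono L x y : x <= y -> le_eb L x -> le_eb L y.
Proof. destruct L; simpl; auto; lra. Qed.

Lemma le_eb_sub L n x : le_eb (sub_eb L n) x <-> le_eb L (x + n).
Proof. destruct L; simpl; [split; intros; lra | tauto | tauto]. Qed.

Section Formulas.
Variable A : Type.
Implicit Types (Y Z : litset A) (F : formula A).

Lemma fsat_freduct_self Z F : fsat Z (freduct Z F) <-> fsat Z F.
Proof.
  induction F; simpl; try tauto.
  destruct (excluded_middle_informative (fsat Z F)); simpl; tauto.
Qed.

Lemma fsat_freduct_not Y Z F : fsat Y (freduct Z (FNot F)) <-> ~ fsat Z F.
Proof. simpl; destruct (excluded_middle_informative (fsat Z F)); simpl; tauto. Qed.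

Lemma freduct_conjF Z l : freduct Z (conjF l) = conjF (map (freduct Z) l).
Proof.
  induction l as [|F [|G l] IH]; [reflexivity | reflexivity |].
  change (FAnd (freduct Z F) (freduct Z (conjF (G :: l)))
          = conjF (freduct Z F :: map (freduct Z) (G :: l))).
  rewrite IH; reflexivity.
Qed.

Lemma freduct_disjF Z l : freduct Z (disjF l) = disjF (map (freduct Z) l).
Proof.
  induction l as [|F [|G l] IH]; [reflexivity | reflexivity |].
  change (FOr (freduct Z F) (freduct Z (disjF (G :: l)))
          = disjF (freduct Z F :: map (freduct Z) (G :: l))).
  rewrite IH; reflexivity.
Qed.

Lemma fsat_conjF Y l : fsat Y (conjF l) <-> forall F, In F l -> fsat Y F.
Proof.
  induction l as [|F [|G l] IH].
  - simpl; split; [intros _ _ [] | auto].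
  - simpl; split; [intros H F' [<-|[]]; exact H | intros H; apply H; auto].
  - change (fsat Y F /\ fsat Y (conjF (G :: l)) <-> forall F', In F' (F :: G :: l) -> fsat Y F').
    rewrite IH; split.
    + intros [HF Hl] F' [<-|HF']; auto.
    + intros H; split; [apply H; left | intros F' HF'; apply H; right]; auto.
Qed.

Lemma fsat_disjF Y l : fsat Y (disjF l) <-> exists F, In F l /\ fsat Y F.
Proof.
  induction l as [|F [|G l] IH].
  - simpl; split; [intros [] | intros [F [[] _]]].
  - simpl; split; [intros H; exists F; auto | intros [F' [[<-|[]] H]]; exact H].
  - change (fsat Y F \/ fsat Y (disjF (G :: l)) <-> exists F', In F' (F :: G :: l) /\ fsat Y F').
    rewrite IH; split.
    + intros [H | [F' [HF' H]]]; [exists F | exists F']; simpl; auto.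
    + intros [F' [[<-|HF'] H]]; [left | right; exists F']; auto.
Qed.

End Formulas.

Section Translation.
Variable A : Type.
Implicit Types (Y Z : litset A) (C : wconstr A) (r : wrule A) (O : wprogram A).

(* Evaluation of rule elements in the reduct [F^Z] checked against [Y]:
   positive elements are read in [Y], negative ones in [Z]. *)
Definition rsat Y Z (c : relem A) : Prop :=
  match c with RLit l => Y l | RNot l => ~ Z l end.

Lemma fsat_reduct_elemF Y Z c : fsat Y (freduct Z (elemF c)) <-> rsat Y Z c.
Proof. destruct c; [simpl; tauto | apply fsat_freduct_not]. Qed.

Lemma fsat_reduct_tr_sel Y Z sel S : monotone_sel sel -> nonneg_weights S ->
  fsat Y (freduct Z (tr_sel sel S)) <-> sel (fsum (rsat Y Z) S) = true.
Proof.
  intros Hm Hn; rewrite <- exists_subseq_sel_iff by assumption.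
  unfold tr_sel; rewrite freduct_disjF, fsat_disjF, map_map; split.
  - intros [F [HF HY]]; apply in_map_iff in HF as [I [<- HI]].
    apply filter_In in HI as [HI Hs]; exists I; repeat split; auto.
    rewrite freduct_conjF, fsat_conjF, map_map in HY.
    intros p Hp; apply fsat_reduct_elemF, HY.
    exact (in_map (fun p => freduct Z (elemF (fst p))) _ _ Hp).
  - intros [I [HI [Hs HY]]].
    eexists; split; [apply in_map, filter_In; split; eauto|].
    rewrite freduct_conjF, fsat_conjF, map_map.
    intros F HF; apply in_map_iff in HF as [p [<- Hp]].
    apply fsat_reduct_elemF; auto.
Qed.

Lemma fsum_rsat_split Y Z S :
  fsum (rsat Y Z) S = psum Y (pos_part S) + neg_sum Z S.
Proof.
  induction S as [|[[l|l] w] S IH]; [simpl; lra | |];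
    rewrite fsum_cons, IH; simpl;
    [destruct (excluded_middle_informative (Y l)) |
     destruct (excluded_middle_informative (~ Z l))]; unfold psum; lra.
Qed.

Lemma wsum_rsat Z S : wsum Z S = fsum (rsat Z Z) S.
Proof. apply fsum_ext; intros [[l|l] w] _; simpl; tauto. Qed.

(* [Y] satisfies [(L <= S)^Z], and [Z |= S <= U] so that the rule survives
   in the weight-constraint reduct. *)
Definition creduct_sat Y Z C : Prop :=
  le_eb (fst (creduct Z C)) (psum Y (snd (creduct Z C))) /\ ge_eb (hi C) (wsum Z (elems C)).

Lemma creduct_sat_lo Y Z C :
  le_eb (fst (creduct Z C)) (psum Y (snd (creduct Z C)))
  <-> le_eb (lo C) (fsum (rsat Y Z) (elems C)).
Proof. unfold creduct; simpl; rewrite le_eb_sub, fsum_rsat_split; tauto. Qed.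

Lemma wsat_creduct_sat Z C : wsat Z C <-> creduct_sat Z Z C.
Proof. unfold wsat, creduct_sat; rewrite creduct_sat_lo, wsum_rsat; tauto. Qed.

Lemma pos_part_In (S : list (relem A * R)) l w :
  In (l, w) (pos_part S) <-> In (RLit l, w) S.
Proof.
  induction S as [|[[l'|l'] w'] S IH]; simpl; [tauto | |]; rewrite IH;
    [split; intros [H|H]; auto; left; congruence | split; [auto | intros [H|H]; easy]].
Qed.

Lemma wf_constr_nonneg C : wf_constr C -> nonneg_weights (elems C).
Proof. intros Hwf [c w]; apply Hwf. Qed.

Lemma wf_constr_pos_part_nonneg C : wf_constr C -> nonneg_weights (pos_part (elems C)).
Proof. intros Hwf [l w] H; apply pos_part_In in H; exact (Hwf _ _ H). Qed.

Lemma creduct_sat_mono Y Y' Z C : subset Y Y' -> wf_constr C ->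
  creduct_sat Y Z C -> creduct_sat Y' Z C.
Proof.
  intros HY Hwf [Hlo Hhi]; split; [|exact Hhi].
  apply (le_eb_mono _ (fsum_mono _ _ HY (wf_constr_pos_part_nonneg Hwf)) Hlo).
Qed.

Lemma fsat_reduct_tr_constr Y Z C : wf_constr C ->
  fsat Y (freduct Z (tr_constr C)) <-> creduct_sat Y Z C.
Proof.
  intros Hwf; pose proof (wf_constr_nonneg Hwf) as Hn.
  unfold tr_constr, creduct_sat.
  change (fsat Y (freduct Z (FAnd ?F ?G))) with (fsat Y (freduct Z F) /\ fsat Y (freduct Z G)).
  rewrite fsat_freduct_not, <- (fsat_freduct_self Z (tr_sel _ _)).
  rewrite !fsat_reduct_tr_sel by (apply leb_eb_monotone || apply ltb_eb_monotone || exact Hn).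
  rewrite leb_ebE, ltb_ebE, <- wsum_rsat, creduct_sat_lo.
  split; intros [H1 H2]; split; auto; apply NNPP; auto.
Qed.

Definition head_reduct_sat Y Z r : Prop :=
  (forall l w, In (RLit l, w) (elems (whead r)) -> Z l -> Y l) /\ creduct_sat Y Z (whead r).

Lemma fsat_reduct_tr_head Y Z r : wf_constr (whead r) ->
  fsat Y (freduct Z (nhead (tr_rule r))) <-> head_reduct_sat Y Z r.
Proof.
  intros Hwf; unfold tr_rule, head_reduct_sat, pos_heads; simpl.
  rewrite freduct_conjF, fsat_conjF, <- fsat_reduct_tr_constr by exact Hwf.
  assert (Hchoice : forall l, fsat Y (freduct Z (FOr (FLit l) (FNot (FLit l)))) <-> (Z l -> Y l)).
  { intros l; simpl; destruct (excluded_middle_informative (Z l)); simpl; tauto. }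
  split.
  - intros H; split.
    + intros l w Hin; apply Hchoice, H, in_map, in_or_app; left.
      apply (in_map (fun l => FOr (FLit l) (FNot (FLit l)))), in_map_iff; exists (l, w); split; [reflexivity | apply pos_part_In, Hin].
    + apply H, in_map, in_or_app; right; left; reflexivity.
  - intros [Hl Hc] F HF; apply in_map_iff in HF as [G [<- HG]].
    apply in_app_or in HG as [HG | [<- | []]]; [|exact Hc].
    apply in_map_iff in HG as [l [<- Hin]]; apply in_map_iff in Hin as [[l' w] [<- Hin]].
    apply Hchoice; apply pos_part_In in Hin; eauto.
Qed.

Lemma fsat_reduct_tr_body Y Z r : (forall C, In C (wbody r) -> wf_constr C) ->
  fsat Y (freduct Z (nbody (tr_rule r))) <-> forall C, In C (wbody r) -> creduct_sat Y Z C.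
Proof.
  intros Hwf; unfold tr_rule; simpl; rewrite freduct_conjF, fsat_conjF, map_map.
  split; intros H C HC.
  - apply fsat_reduct_tr_constr; auto.
    apply H, (in_map (fun C => freduct Z (tr_constr C))), HC.
  - apply in_map_iff in HC as [C' [<- HC']]; apply fsat_reduct_tr_constr; auto.
Qed.

Lemma nsat_nreduct_tr_prog O Y Z : wf_wprogram O ->
  nsat Y (nreduct (tr_prog O) Z) <->
  forall r, O r -> (forall C, In C (wbody r) -> creduct_sat Y Z C) -> head_reduct_sat Y Z r.
Proof.
  intros Hwf; split.
  - intros H r Or HB; destruct (Hwf r Or) as [Hh Hb].
    apply fsat_reduct_tr_head; auto.
    apply (H (mkNRule (freduct Z (nhead (tr_rule r))) (freduct Z (nbody (tr_rule r))))).
    { exists (tr_rule r); split; [exists r|]; auto. }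
    apply fsat_reduct_tr_body; auto.
  - intros H r' [r0 [[r [Or ->]] ->]]; cbn [nhead nbody]; destruct (Hwf r Or) as [Hh Hb].
    rewrite fsat_reduct_tr_body, fsat_reduct_tr_head by assumption; auto.
Qed.

Lemma nsat_nreduct_tr_prog_self O Z : wf_wprogram O ->
  nsat Z (nreduct (tr_prog O) Z) <-> wsat_prog Z O.
Proof.
  intros Hwf; rewrite nsat_nreduct_tr_prog by exact Hwf; unfold wsat_prog, head_reduct_sat.
  split; intros H r Or HB.
  - apply wsat_creduct_sat, H; auto; intros C HC; apply wsat_creduct_sat; auto.
  - split; [auto|]; apply wsat_creduct_sat, H; auto.
    intros C HC; apply wsat_creduct_sat; auto.
Qed.

Lemma psat_wreduct_body Y Z r l :
  psat Y (mkPR l (map (creduct Z) (wbody r))) <->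
  ((forall C, In C (wbody r) -> le_eb (fst (creduct Z C)) (psum Y (snd (creduct Z C)))) -> Y l).
Proof.
  unfold psat; cbn [phead pbody]; split; intros H HB; apply H.
  - intros b Hb; apply in_map_iff in Hb as [C [<- HC]]; auto.
  - intros C HC; apply HB, in_map, HC.
Qed.

Lemma pclosed_of_nsat O Y Z : wf_wprogram O ->
  nsat Y (nreduct (tr_prog O) Z) -> pclosed (wreduct O Z) Y.
Proof.
  intros Hwf HY pr [r [Or [Hhi [l [w [Hin [Zl ->]]]]]]].
  apply psat_wreduct_body; intros Hlo.
  rewrite nsat_nreduct_tr_prog in HY by exact Hwf.
  refine (proj1 (HY r Or _) l w Hin Zl); intros C HC; split; auto.
Qed.

Lemma nsat_of_pclosed O Y Z : wf_wprogram O -> subset Y Z -> wsat_prog Z O ->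
  pclosed (wreduct O Z) Y -> nsat Y (nreduct (tr_prog O) Z).
Proof.
  intros Hwf HYZ HZ HY; apply nsat_nreduct_tr_prog; auto.
  intros r Or HB; destruct (Hwf r Or) as [Hh Hb].
  assert (Hhead : forall l w, In (RLit l, w) (elems (whead r)) -> Z l -> Y l).
  { intros l w Hin Zl; refine (proj1 (psat_wreduct_body _ _ r l) (HY _ _) _).
    - exists r; split; [exact Or | split; [intros C HC; exact (proj2 (HB C HC)) | eauto]].
    - intros C HC; exact (proj1 (HB C HC)). }
  assert (HZhead : creduct_sat Z Z (whead r)).
  { apply wsat_creduct_sat, HZ; auto; intros C HC.
    apply wsat_creduct_sat, (creduct_sat_mono HYZ); auto. }
  split; [exact Hhead|]; destruct HZhead as [Hlo Hhi]; split; [|exact Hhi].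
  (* the positive head literals true in Z are already true in Y *)
  unfold creduct in *; simpl in *.
  replace (psum Y (pos_part (elems (whead r)))) with (psum Z (pos_part (elems (whead r))));
    [exact Hlo|].
  apply fsum_ext; intros [l w] Hin; apply pos_part_In in Hin; simpl; split; eauto.
Qed.

Definition pbody_nonneg (P : prule A -> Prop) : Prop :=
  forall pr, P pr -> forall b, In b (pbody pr) -> nonneg_weights (snd b).

Lemma cl_pclosed (P : prule A -> Prop) : pbody_nonneg P -> pclosed P (cl P).
Proof.
  intros Hn pr Ppr Hb Y HY; apply (HY pr Ppr); intros b Hin.
  apply (le_eb_mono _ (fsum_mono (cl P) Y (fun l Hl => Hl Y HY) (Hn pr Ppr b Hin))), Hb, Hin.
Qed.

Lemma wreduct_pbody_nonneg O Z : wf_wprogram O -> pbody_nonneg (wreduct O Z).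
Proof.
  intros Hwf pr [r [Or [_ [l [w [_ [_ ->]]]]]]] b Hb; simpl in Hb.
  apply in_map_iff in Hb as [C [<- HC]].
  apply wf_constr_pos_part_nonneg, (proj2 (Hwf r Or)), HC.
Qed.

Lemma cl_wreduct_subset O Z : subset (cl (wreduct O Z)) Z.
Proof. intros l Hl; apply Hl; intros pr [r [_ [_ [l' [w [_ [Zl' ->]]]]]]] _; exact Zl'. Qed.

End Translation.

Theorem theorem1 (A : Type) (O : wprogram A) :
  wf_wprogram O ->
  forall Z : litset A, w_answer_set O Z <-> n_answer_set (tr_prog O) Z.
Proof.
  intros Hwf Z; unfold w_answer_set, n_answer_set, answer_set_notfree.
  rewrite nsat_nreduct_tr_prog_self by exact Hwf.
  split.
  - intros [Hc [HZ Hcl]]; split; [exact Hc | split; [exact HZ|]].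
    intros Y _ _ HY l Zl; apply Hcl in Zl; apply Zl.
    exact (pclosed_of_nsat Hwf HY).
  - intros [Hc [HZ Hmin]]; split; [exact Hc | split; [exact HZ|]].
    pose proof (@cl_wreduct_subset A O Z) as HclZ.
    intros l; split; [apply HclZ|]; revert l.
    apply Hmin; [intros a [H1 H2]; apply (Hc a); split; apply HclZ; auto | exact HclZ |].
    apply nsat_of_pclosed; auto.
    apply cl_pclosed, wreduct_pbody_nonneg, Hwf.
Qed.
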